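(* Consider the CCDE setting described in the context, with user set $V$, core $\mathscr{R}^*_{\mathrm{CO}}(V)$, fundamental partition $\mathcal{P}^*$ (with $|\mathcal{P}^*|\ge2$), $K=|\mathcal{P}^*|-1$, $\mathbb{Q}_K=\{z/K:z\in\mathbb{Z}\}$, weights $w_V\in\mathbb{R}_{>0}^{|V|}$ and $g(r_V)=\sum_{i\in V}r_i^2/w_i$. Run the following steepest descent algorithm (SDA): start from any $r^{(0)}_V\in\mathscr{R}^*_{\mathrm{CO}}(V)\cap\mathbb{Q}_K^{|V|}$ and set $n=0$; repeat: (1) for each $i\in V$, let $\mathrm{dep}(r^{(n)}_V,i)$ be the minimal (inclusion-wise smallest) minimizer of $\min\{f_{R_{\mathrm{CO}}}(X)-r^{(n)}(X): i\in X\subseteq V\}$; (2) let $(i^*,j^* )$ minimize $g\big(r^{(n)}_V+\frac1K(\chi_i-\chi_j)\big)$ over pairs $i,j\in V$ with $j\in\mathrm{dep}(r^{(n)}_V,i)\setminus\{i\}$; (3) if $g\big(r^{(n)}_V+\frac1K(\chi_{i^*}-\chi_{j^*})\big)<g(r^{(n)}_V)$, set $r^{(n+1)}_V=r^{(n)}_V+\frac1K(\chi_{i^*}-\chi_{j^*})$ and $n\leftarrow n+1$; otherwise set $r^{(n+1)}_V=r^{(n)}_V$; until $r^{(n+1)}_V=r^{(n)}_V$, and output $r^{(n)}_V$. Then the estimation sequence $\{r^{(n)}_V\}$ generated by the SDA converges to the minimizer $r^*_V$ of $\min\{g(r_V): r_V\in\mathscr{R}^*_{\mathrm{CO}}(V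)\cap\mathbb{Q}_K^{|V|}\}$.
   Context: CCDE setting: there is a finite collection of independent packets, each uniformly distributed over a finite field; each user $i\in V$ ($|V|>1$) observes $Z_i$, a subset of the packets, and entropy is measured in packets, so that for $X\subseteq V$, $H(X)$ is the number of distinct packets observed by users in $X$ (integer-valued). Write $r(X)=\sum_{i\in X}r_i$ and $H(X\mid Y)=H(X\cup Y)-H(Y)$. The achievable region is $\mathscr{R}(V)=\{r_V\in\mathbb{R}^{|V|}: r(X)\ge H(X\mid V\setminus X)\ \forall X\subsetneq V\}$, $R_{\mathrm{CO}}=\min\{r(V): r_V\in\mathscr{R}(V)\}$, and the core is $\mathscr{R}^*_{\mathrm{CO}}(V)=\{r_V\in\mathscr{R}(V): r(V)=R_{\mathrm{CO}}\}$. For $\alpha\in\mathbb{R}$, $f_\alpha(\emptyset)=0$ and $f_\alpha(X)=\alpha-H(V\setminus X\mid X)$ for $X\neq\emptyset$. The fundamental partition $\mathcal{P}^*$ is the finest partition of $V$ minimizing $\sum_{C\in\mathcal{P}}f_{R_{\mathrm{CO}}}(C)$ over partitions $\mathcal{P}$ of $V$. $\chi_i$ is the characteristic vector of $\{i\}$. *)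

From HB Require Import structures.
From mathcomp Require Import all_boot all_order all_algebra.
From mathcomp Require Import reals.
Set Implicit Arguments. Unset Strict Implicit. Unset Printing Implicit Defensive.
Import Order.TTheory GRing.Theory Num.Theory.
Local Open Scope ring_scope.

Section CCDE.
Variables (R : realType) (V Pk : finType) (Z : V -> {set Pk}).

(* H(X) = number of distinct packets observed by users in X *)
Definition H (X : {set V}) : nat := #|\bigcup_(i in X) Z i|.

Definition Hc (X Y : {set V}) : R := (H (X :|: Y))%:R - (H Y)%:R.

Definition rsum (r : {ffun V -> R}) (X : {set V}) : R := \sum_(i in X) r i.

Definition achievable (r : {ffun V -> R}) : Prop :=
  forall X : {set V}, X \proper [set: V] -> Hc X (~: X) <= rsum r X.

Definition is_RCO (RCO : R) : Prop :=
  (exists r, achievable r /\ rsum r [set: V] = RCO) /\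
  (forall r, achievable r -> RCO <= rsum r [set: V]).

Definition in_core (RCO : R) (r : {ffun V -> R}) : Prop :=
  achievable r /\ rsum r [set: V] = RCO.

Definition f (alpha : R) (X : {set V}) : R :=
  if X == set0 then 0 else alpha - Hc (~: X) X.

Definition fsum (alpha : R) (P : {set {set V}}) : R := \sum_(C in P) f alpha C.

Definition finer (P1 P2 : {set {set V}}) : Prop :=
  forall C, C \in P1 -> exists2 D, D \in P2 & C \subset D.

Definition minimizing_partition (alpha : R) (P : {set {set V}}) : Prop :=
  partition P [set: V] /\
  forall Q, partition Q [set: V] -> fsum alpha P <= fsum alpha Q.

Definition fundamental_partition (RCO : R) (P : {set {set V}}) : Prop :=
  minimizing_partition RCO P /\
  forall Q, minimizing_partition RCO Q -> finer P Q.

Definition in_QK (K : nat) (r : {ffun V -> R}) : Prop :=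
  forall i, exists z : int, r i = z%:~R / K%:R.

Definition g (w : {ffun V -> R}) (r : {ffun V -> R}) : R :=
  \sum_(i : V) r i ^+ 2 / w i.

Definition is_dep (RCO : R) (r : {ffun V -> R}) (i : V) (D : {set V}) : Prop :=
  i \in D /\
  (forall X : {set V}, i \in X -> f RCO D - rsum r D <= f RCO X - rsum r X) /\
  (forall X : {set V}, i \in X ->
     f RCO X - rsum r X <= f RCO D - rsum r D -> D \subset X).

Definition move (K : nat) (r : {ffun V -> R}) (i j : V) : {ffun V -> R} :=
  [ffun k => r k + ((k == i)%:R - (k == j)%:R) / K%:R].

Definition admissible (RCO : R) (r : {ffun V -> R}) (i j : V) : Prop :=
  exists D, is_dep RCO r i D /\ j \in D /\ j != i.

(* one iteration of the SDA: r' is a possible r^(n+1) given r = r^(n)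
   (ties in step (2) broken arbitrarily) *)
Definition SDA_step (RCO : R) (K : nat) (w : {ffun V -> R})
    (r r' : {ffun V -> R}) : Prop :=
  (exists i j, admissible RCO r i j /\
     (forall i' j', admissible RCO r i' j' ->
        g w (move K r i j) <= g w (move K r i' j')) /\
     g w (move K r i j) < g w r /\ r' = move K r i j)
  \/
  ((forall i' j', admissible RCO r i' j' -> g w r <= g w (move K r i' j')) /\
   r' = r).

Definition g_minimizer (RCO : R) (K : nat) (w r : {ffun V -> R}) : Prop :=
  in_core RCO r /\ in_QK K r /\
  forall s, in_core RCO s -> in_QK K s -> g w r <= g w s.

End CCDE.

From HB Require Import structures.
From mathcomp Require Import all_boot all_order all_algebra.
From mathcomp Require Import reals lra zify.
From Stdlib Require Import Classical_Prop.
Set Implicit Arguments. Unset Strict Implicit. Unset Printing Implicit Defensive.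
Import Order.TTheory GRing.Theory Num.Theory.
Local Open Scope ring_scope.

(* The core is the base polyhedron {x : x(V) = R_CO, x(Y) <= f(Y)} of
   f = f_{R_CO}, which is submodular on intersecting pairs, and dep(r, i) is the
   smallest r-tight set containing i. A step r + (chi_i - chi_j)/K with
   j in dep(r, i) stays in the core and in Q_K, because every set containing i
   but not j has positive slack, and slacks are multiples of 1/K. While the SDA
   moves, g strictly decreases; the core meets Q_K^|V| in finitely many points
   (coordinates lie in [0, R_CO]), so the SDA halts at some r.
   For a feasible s <> r, the simultaneous exchange property of base polyhedra
   gives i, j such that s + (chi_i - chi_j)/K is feasible and
   r + (chi_j - chi_i)/K is an SDA move; convexity of the coordinates of g
   makes the former no worse than s, and it is 2/K closer to r in l1-distance.
   Induction on that distance yields g(r) <= g(s). *)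

Lemma finite_descent (R : numDomainType) (T : Type) (F : finType) (code : T -> F)
    (phi : T -> R) (u : nat -> T) :
  (forall m n, code (u m) = code (u n) -> u m = u n) ->
  (forall n, u n.+1 <> u n -> phi (u n.+1) < phi (u n)) ->
  exists n, u n.+1 = u n.
Proof.
move=> code_inj desc; apply: NNPP => stuck.
have lt_phi m n : (m < n)%N -> phi (u n) < phi (u m).
  have desc_n k : phi (u k.+1) < phi (u k) by apply: desc => e; apply: stuck; exists k.
  elim: n => // n IHn; rewrite ltnS leq_eqVlt => /orP[/eqP <- //|/IHn].
  exact: lt_trans (desc_n n).
have inj : injective (fun n : 'I_#|F|.+1 => code (u n)).
  move=> m n /code_inj umn; apply/val_inj/eqP.
  by case: ltngtP => // /lt_phi; rewrite umn ltxx.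
by have := leq_card _ inj; rewrite card_ord ltnn.
Qed.

Section Core.
Variables (R : realType) (V Pk : finType) (Z : V -> {set Pk}) (RCO : R).
Implicit Types (w x y : {ffun V -> R}) (A B D T U X Y : {set V}).

Lemma H_mono A B : A \subset B -> (H Z A <= H Z B)%N.
Proof.
move=> sAB; apply/subset_leq_card/bigcupsP => i iA.
exact/bigcup_sup/(subsetP sAB).
Qed.

Lemma H_submod A B : (H Z (A :|: B) + H Z (A :&: B) <= H Z A + H Z B)%N.
Proof.
rewrite /H bigcup_setU -[leqRHS]cardsUI leq_add2l; apply/subset_leq_card.
apply/bigcupsP => i /setIP[iA iB].
by rewrite subsetI (bigcup_sup i iA) (bigcup_sup i iB).
Qed.

Lemma f_nonempty X : X != set0 -> f Z RCO X = RCO - (H Z setT)%:R + (H Z X)%:R.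
Proof. by move=> /negbTE X0; rewrite /f X0 /Hc setUC setUCr; lra. Qed.

Lemma f_setT : [set: V] != set0 -> f Z RCO setT = RCO.
Proof. by move=> T0; rewrite f_nonempty //; lra. Qed.

Lemma f_submod A B : A :&: B != set0 ->
  f Z RCO (A :|: B) + f Z RCO (A :&: B) <= f Z RCO A + f Z RCO B.
Proof.
move=> AB0.
have A0 : A != set0 by apply: contraNneq AB0 => ->; rewrite set0I.
have B0 : B != set0 by apply: contraNneq AB0 => ->; rewrite setI0.
have U0 : A :|: B != set0 by rewrite setU_eq0 negb_and A0.
rewrite !f_nonempty //; have := H_submod A B; rewrite -(ler_nat R) !natrD; lra.
Qed.

Lemma rsum0 x : rsum x set0 = 0.
Proof. by rewrite /rsum big_set0. Qed.

Lemma rsumT x : rsum x setT = \sum_k x k.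
Proof. by apply: eq_bigl => k; rewrite inE. Qed.

Lemma rsumID x A B : rsum x A = rsum x (A :&: B) + rsum x (A :\: B).
Proof. exact: big_setID. Qed.

Lemma rsumUI x A B : rsum x (A :|: B) + rsum x (A :&: B) = rsum x A + rsum x B.
Proof.
rewrite (rsumID x (A :|: B) A) setUK (rsumID x B A) setIC.
by rewrite setDUl setDv set0U; lra.
Qed.

Lemma rsumUD x A B : A :&: B = set0 -> rsum x (A :|: B) = rsum x A + rsum x B.
Proof. by move=> AB0; rewrite -rsumUI AB0 rsum0 addr0. Qed.

Lemma rsumC x A : rsum x (~: A) = rsum x setT - rsum x A.
Proof. by rewrite (rsumID x setT A) setTI setTD; lra. Qed.

Definition in_base x := rsum x setT = RCO /\ forall Y, rsum x Y <= f Z RCO Y.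

Lemma in_coreE x : in_core Z RCO x <-> in_base x.
Proof.
split=> [[ach sT]|[sT le_f]]; split=> // Y.
  have [->|Y0] := eqVneq Y set0; first by rewrite rsum0 /f eqxx.
  have : ~: Y \proper setT.
    by rewrite properT; apply: contraNneq Y0 => CY; rewrite -[Y]setCK CY setCT.
  by move/ach; rewrite setCK /f (negbTE Y0) rsumC sT; lra.
rewrite properT => YT.
have CY0 : ~: Y != set0 by apply: contraNneq YT => CY; rewrite -[Y]setCK CY setC0.
by have := le_f (~: Y); rewrite /f (negbTE CY0) setCK rsumC sT; lra.
Qed.

Definition tight x Y := rsum x Y == f Z RCO Y.

Lemma tightIU x A B : in_base x -> tight x A -> tight x B -> A :&: B != set0 ->
  tight x (A :&: B) /\ tight x (A :|: B).
Proof.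
move=> [_ le_f] /eqP tA /eqP tB AB0.
have := le_f (A :&: B); have := le_f (A :|: B); have := f_submod AB0.
by have := rsumUI x A B; split; apply/eqP; lra.
Qed.

Lemma min_tight_exists x i : in_base x ->
  exists D, [/\ i \in D, tight x D & forall Y, i \in Y -> tight x Y -> D \subset Y].
Proof.
move=> xB; pose P D := (i \in D) && tight x D.
have T0 : [set: V] != set0 by apply/set0Pn; exists i; rewrite inE.
have PT : P setT by rewrite /P inE /tight f_setT // xB.1 eqxx.
case: (arg_minnP (fun D => #|D|) PT) => D /andP[iD tD] minD.
exists D; split => // Y iY tY.
have YD0 : Y :&: D != set0 by apply/set0Pn; exists i; rewrite inE iY.
have [tYD _] := tightIU xB tY tD YD0.
have PYD : P (Y :&: D) by rewrite /P inE iY iD.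
have /eqP <- : Y :&: D == D by rewrite eqEcard subsetIr minD.
exact: subsetIl.
Qed.

Lemma min_tight_is_dep x i D : in_base x -> i \in D -> tight x D ->
  (forall Y, i \in Y -> tight x Y -> D \subset Y) -> is_dep Z RCO x i D.
Proof.
move=> [_ le_f] iD /eqP tD minD; split => //; split => [X _|X iX le_X].
  by have := le_f X; lra.
by apply: minD => //; apply/eqP; have := le_f X; lra.
Qed.

Lemma dep_slack x i D Y : in_base x -> is_dep Z RCO x i D -> i \in Y ->
  ~~ (D \subset Y) -> rsum x Y < f Z RCO Y.
Proof.
move=> [_ le_f] [_ [_ minD]] iY DY.
have : f Z RCO D - rsum x D < f Z RCO Y - rsum x Y.
  by rewrite ltNge; apply: contra DY; apply: minD.
by have := le_f D; lra.
Qed.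

Definition tight_cover x D U := forall u, u \in U ->
  exists T, [/\ u \in T, T \subset U, tight x T & T :&: D != set0].

Lemma tight_cover_setD x D U T : in_base x -> tight_cover x D U ->
  T \subset U -> tight x T ->
  (forall T', [&& T' \subset U, tight x T' & T' :&: D != set0] -> #|T'| <= #|T|)%N ->
  tight_cover x D (U :\: T).
Proof.
move=> xB covU TU tT maxT v /setDP[vU vT]; have [Tv [vTv TvU tTv TvD]] := covU v vU.
have TvT : Tv :&: T == set0.
  apply: contraT => TvT0; have [_ tTvT] := tightIU xB tTv tT TvT0.
  have TvTD : (Tv :|: T) :&: D != set0.
    by apply: contraNneq TvD => TvTD; rewrite -subset0 -TvTD setSI // subsetUl.
  have /eqP TTvT : T == Tv :|: T.
    by rewrite eqEcard subsetUr maxT // subUset TvU TU tTvT.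
  by move: vT; rewrite TTvT inE vTv.
by exists Tv; split => //; rewrite subsetD TvU -setI_eq0 TvT.
Qed.

(* Induction on [#|U|], peeling off an inclusion-maximal [x]-tight block [T]. *)
Lemma cover_bound x y D U : in_base x -> in_base y -> tight y D ->
  tight_cover x D U -> f Z RCO (D :|: U) <= rsum y (D :\: U) + rsum x U.
Proof.
move=> xB [_ le_fy] tD; have [n] := ubnP #|U|; elim: n U => // n IH U ltU covU.
have [->|/set0Pn[u uU]] := eqVneq U set0.
  by rewrite setU0 setD0 rsum0 addr0 (eqP tD).
pose P T := [&& T \subset U, tight x T & T :&: D != set0].
have [T0 [_ T0U tT0 T0D]] := covU u uU.
have PT0 : P T0 by rewrite /P T0U tT0.
case: (arg_maxnP (fun T : {set V} => #|T|) PT0) => T /and3P[TU tT TD] maxT.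
have covU' := tight_cover_setD xB covU TU tT maxT.
have ltU' : (#|U :\: T| < n)%N.
  have T_gt0 : (0 < #|T|)%N by rewrite card_gt0; apply: contraNneq TD => ->; rewrite set0I.
  by rewrite cardsD (setIidPr TU); have := subset_leq_card TU; lia.
have TU_v v : v \in T -> v \in U := subsetP TU v.
have eI : (D :|: U :\: T) :&: T = D :&: T.
  by apply/setP => v; rewrite !inE; case: (v \in T); rewrite ?andbT ?andbF ?orbF.
have eU : (D :|: U :\: T) :|: T = D :|: U.
  apply/setP => v; rewrite !inE.
  by case vT: (v \in T); rewrite ?(TU_v v vT) ?orbT ?orbF ?andbT.
have eD : (D :\: U) :&: (D :&: T) = set0.
  apply/setP => v; rewrite !inE.
  by case vT: (v \in T); rewrite ?(TU_v v vT) ?andbF.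
have DT0 : (D :|: U :\: T) :&: T != set0 by rewrite eI setIC.
have := f_submod DT0; rewrite eI eU.
have := IH _ ltU' covU'; rewrite setDDr rsumUD // (rsumID x U T) (setIidPr TU).
by have := le_fy (D :&: T); have := eqP tT; lra.
Qed.

(* Simultaneous exchange: both [move K y i j] and [move K x j i] stay in the core. *)
Lemma exchange x y i : in_base x -> in_base y -> y i < x i ->
  exists j, [/\ x j < y j, (forall Y, i \in Y -> tight y Y -> j \in Y)
              & (forall T, j \in T -> tight x T -> i \in T)].
Proof.
move=> xB yB lt_yx_i.
have [D [iD tD minD]] := min_tight_exists i yB.
pose U := [set u | [exists T : {set V},
  [&& u \in T, tight x T, i \notin T & T :&: D != set0]]].
have covU : tight_cover x D U.
  move=> u; rewrite inE => /existsP[T /and4P[uT tT iT TD]]; exists T; split => //.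
  by apply/subsetP => v vT; rewrite inE; apply/existsP; exists T; rewrite vT tT iT.
have iU : i \notin U by rewrite inE; apply/existsP => -[T /and4P[-> _ /negP]].
have le_DU : rsum x (D :\: U) <= rsum y (D :\: U).
  have := cover_bound xB yB tD covU; have := xB.2 (D :|: U).
  by rewrite (rsumID x (D :|: U) U) (setIidPr (subsetUr D U)) setDUl setDv setU0; lra.
have [j /setDP[jD jU] lt_xy_j] : exists2 j, j \in D :\: U & x j < y j.
  apply/exists_inP; apply: contraLR le_DU => /exists_inPn ge_xy; rewrite -ltNge.
  have iDU : i \in D :\: U by rewrite inE iU.
  rewrite /rsum (bigD1 i iDU) [ltRHS](bigD1 i iDU) /= ltr_leD // ler_sum // => k.
  by case/andP=> /ge_xy; rewrite -leNgt.
exists j; split => // [Y iY tY|T jT tT]; first exact: subsetP (minD Y iY tY) j jD.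
apply: contraR jU => iT; rewrite inE; apply/existsP; exists T.
by rewrite jT tT iT; apply/set0Pn; exists j; rewrite inE jT.
Qed.

Section Lattice.
Variable K : nat.
Hypothesis K_gt0 : (0 < K)%N.

Let K_pos : 0 < K%:R :> R. Proof. by rewrite ltr0n. Qed.
Let K_neq0 : K%:R != 0 :> R. Proof. exact: lt0r_neq0. Qed.
Let invK_gt0 : 0 < K%:R^-1 :> R. Proof. by rewrite invr_gt0. Qed.

Lemma in_QKE x : in_QK K x <-> forall k, x k * K%:R \is a Num.int.
Proof.
split=> [xQ k|xI k]; first by have [z ->] := xQ k; rewrite mulfVK ?intr_int.
by have /intrP[z xkK] := xI k; exists z; rewrite -xkK mulfK.
Qed.

Lemma invK_le (a : R) : a * K%:R \is a Num.int -> 0 < a -> K%:R^-1 <= a.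
Proof.
move=> aI a_gt0; rewrite -div1r ler_pdivrMr //.
have aK_ge0 : 0 <= a * K%:R by rewrite mulr_ge0 ?ltW.
by have := norm_intr_ge1 aI; rewrite ger0_norm //; apply; rewrite mulf_neq0 ?lt0r_neq0.
Qed.

Definition in_core_QK x := in_core Z RCO x /\ in_QK K x.

Lemma slack_int x Y : in_core_QK x -> Y != set0 ->
  (f Z RCO Y - rsum x Y) * K%:R \is a Num.int.
Proof.
move=> [/in_coreE[sT _] /in_QKE xI] Y0.
have rsumI X : rsum x X * K%:R \is a Num.int by rewrite /rsum mulr_suml rpred_sum.
have natI n : (n%:R * K%:R : R) \is a Num.int by rewrite -natrM natr_int.
by rewrite f_nonempty // -sT !(mulrBl, mulrDl) !(rpredB, rpredD).
Qed.

Lemma sum_indicator Y i : \sum_(k in Y) ((k == i)%:R : R) = (i \in Y)%:R.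
Proof.
have [iY|iY] := boolP (i \in Y).
  by rewrite (bigD1 i iY) /= eqxx big1 ?addr0 // => k /andP[_ /negbTE ->].
by rewrite big1 // => k kY; case: eqP => // ki; rewrite -ki kY in iY.
Qed.

Lemma rsum_move x i j Y :
  rsum (move K x i j) Y = rsum x Y + ((i \in Y)%:R - (j \in Y)%:R) / K%:R.
Proof.
rewrite /rsum; under eq_bigr => k _ do rewrite ffunE.
by rewrite big_split /= -mulr_suml sumrB !sum_indicator.
Qed.

Lemma move_in_core_QK x i j : in_core_QK x ->
  (forall Y, i \in Y -> j \notin Y -> rsum x Y < f Z RCO Y) ->
  in_core_QK (move K x i j).
Proof.
move=> xQ slack; have [/in_coreE[sT le_f] /in_QKE xI] := xQ; split; last first.
  apply/in_QKE => k; rewrite ffunE mulrDl mulfVK //.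
  by rewrite rpredD ?rpredB ?natr_int.
apply/in_coreE; split => [|Y]; first by rewrite rsum_move !inE subrr mul0r addr0.
rewrite rsum_move; have := le_f Y.
case: (boolP (i \in Y)) => iY; case: (boolP (j \in Y)) => jY;
  rewrite /= ?mulr1n ?mulr0n; have := invK_gt0; [lra | | lra | lra].
have Y0 : Y != set0 by apply/set0Pn; exists i.
have := invK_le (slack_int xQ Y0); rewrite subr_gt0 => /(_ (slack Y iY jY)); lra.
Qed.

Lemma sqr_exchange (a b t : R) : 0 <= t -> t <= a - b ->
  (a - t) ^+ 2 + (b + t) ^+ 2 <= a ^+ 2 + b ^+ 2.
Proof.
move=> t_ge0 t_le; have : 0 <= t * (a - b - t) by rewrite mulr_ge0 // subr_ge0.
nra.
Qed.

Lemma g_exchange w x y i j : (forall k, 0 <= w k) ->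
  K%:R^-1 <= x i - y i -> K%:R^-1 <= y j - x j ->
  g w (move K x j i) + g w (move K y i j) <= g w x + g w y.
Proof.
move=> w_ge0 le_i le_j; have t_gt0 := invK_gt0.
have ij : i != j by apply/eqP => eij; move: le_i le_j; rewrite eij; lra.
rewrite /g -!big_split /=; apply: ler_sum => k _; rewrite !ffunE -!mulrDl.
rewrite ler_wpM2r ?invr_ge0 //.
have [->|ki] := eqVneq k i.
  rewrite (negbTE ij) /= ?mulr1n ?mulr0n sub0r subr0 mulNr mul1r.
  exact: sqr_exchange (ltW t_gt0) _.
have [->|kj] := eqVneq k j.
  rewrite /= ?mulr1n ?mulr0n subr0 sub0r mulNr mul1r addrC [x j ^+ 2 + _]addrC.
  exact: sqr_exchange (ltW t_gt0) _.
by rewrite subrr mul0r !addr0.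
Qed.

Definition l1dist x y := \sum_k `|x k - y k|.

Lemma l1dist_move x y i j : K%:R^-1 <= x i - y i -> K%:R^-1 <= y j - x j ->
  l1dist x (move K y i j) + 2 / K%:R = l1dist x y.
Proof.
move=> le_i le_j; have t_gt0 := invK_gt0.
have ij : i != j by apply/eqP => eij; move: le_i le_j; rewrite eij; lra.
have -> : l1dist x (move K y i j) =
    \sum_k (`|x k - y k| - ((k == i)%:R + (k == j)%:R) / K%:R).
  apply: eq_bigr => k _; rewrite ffunE.
  have [->|ki] := eqVneq k i.
    by rewrite (negbTE ij) /= ?mulr1n ?mulr0n !ger0_norm; lra.
  have [->|kj] := eqVneq k j.
    by rewrite /= ?mulr1n ?mulr0n !ler0_norm; lra.
  by rewrite subrr addr0 !mul0r addr0 subr0.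
have sum1 l : \sum_k ((k == l)%:R : R) = 1.
  by rewrite (bigD1 l) //= eqxx big1 ?addr0 // => k /negbTE ->.
by rewrite sumrB -mulr_suml big_split /= !sum1 /l1dist; lra.
Qed.

Definition stationary w x :=
  forall i j, admissible Z RCO x i j -> g w x <= g w (move K x i j).

Lemma stationary_descent w x y : (forall k, 0 <= w k) -> stationary w x ->
  in_core_QK x -> in_core_QK y -> x = y \/
  exists y', [/\ in_core_QK y', g w y' <= g w y & l1dist x y' + 2 / K%:R = l1dist x y].
Proof.
move=> w_ge0 x_st xQ yQ.
have xB := (in_coreE x).1 xQ.1; have yB := (in_coreE y).1 yQ.1.
have /in_QKE xI := xQ.2; have /in_QKE yI := yQ.2.
have [/existsP[i lt_yx_i]|/existsPn ge_yx] := boolP [exists i, y i < x i]; last first.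
  left; apply/ffunP => k; apply/eqP; rewrite eq_sym -subr_eq0; apply/eqP.
  have diff_ge0 l : 0 <= y l - x l by rewrite subr_ge0 leNgt ge_yx.
  have sum0 : \sum_l (y l - x l) = 0 by rewrite sumrB -!rsumT xB.1 yB.1 subrr.
  exact: (psumr_eq0P (fun l _ => diff_ge0 l) sum0).
right; have [j [lt_xy_j tight_y tight_x]] := exchange xB yB lt_yx_i.
have le_i : K%:R^-1 <= x i - y i by rewrite invK_le ?subr_gt0 // mulrBl rpredB.
have le_j : K%:R^-1 <= y j - x j by rewrite invK_le ?subr_gt0 // mulrBl rpredB.
have y'Q : in_core_QK (move K y i j).
  apply: move_in_core_QK => // Y iY jY; have := yB.2 Y; rewrite le_eqVlt.
  by case/orP => // tY; rewrite (tight_y Y iY tY) in jY.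
have adm : admissible Z RCO x j i.
  have [D [jD tD minD]] := min_tight_exists j xB.
  exists D; split; first exact: min_tight_is_dep.
  by split; [exact: tight_x | apply: contraTneq lt_yx_i => ->; rewrite -leNgt ltW].
have := x_st j i adm; have := g_exchange w_ge0 le_i le_j.
by have := l1dist_move le_i le_j; exists (move K y i j); split => //; lra.
Qed.

Lemma stationary_optimal w x : (forall k, 0 <= w k) -> stationary w x ->
  in_core_QK x -> forall y, in_core_QK y -> g w x <= g w y.
Proof.
move=> w_ge0 x_st xQ y yQ; have t_gt0 := invK_gt0.
have l1dist_ge0 z : 0 <= l1dist x z by apply: sumr_ge0.
have [n] : exists n : nat, l1dist x y <= n%:R / K%:R.
  exists (Num.bound (l1dist x y * K%:R)).
  by rewrite ler_pdivlMr // ltW // archi_boundP // mulr_ge0 // ltW.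
elim: n y yQ => [|n IHn] y yQ le_n.
  have [<- //|[y' [_ _ dist_y']]] := stationary_descent w_ge0 x_st xQ yQ.
  by have := l1dist_ge0 y'; move: le_n; rewrite mul0r; lra.
have [<- //|[y' [y'Q le_g dist_y']]] := stationary_descent w_ge0 x_st xQ yQ.
apply: le_trans (IHn y' y'Q _) le_g.
by move: le_n; rewrite -natr1 mulrDl; lra.
Qed.

Lemma in_core_ge0 x k : (1 < #|V|)%N -> in_core Z RCO x -> 0 <= x k.
Proof.
move=> V_gt1 [ach _]; have : [set k] \proper setT.
  by rewrite properT; apply: contraTneq V_gt1 => kT; rewrite -cardsT -kT cards1.
move/ach; rewrite /rsum big_set1 /Hc setUCr; apply: le_trans.
by rewrite subr_ge0 ler_nat H_mono ?subsetT.
Qed.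

Lemma in_core_le x k : (1 < #|V|)%N -> in_core Z RCO x -> x k <= RCO.
Proof.
move=> V_gt1 xC; rewrite -xC.2 rsumT (bigD1 k) //= lerDl.
by apply: sumr_ge0 => l _; apply: in_core_ge0.
Qed.

Definition code M x : {ffun V -> 'I_M.+1} := [ffun k => inord (Num.truncn (x k * K%:R))].

Lemma code_inj x y : (1 < #|V|)%N -> in_core_QK x -> in_core_QK y ->
  code (Num.truncn (RCO * K%:R)) x = code (Num.truncn (RCO * K%:R)) y -> x = y.
Proof.
move=> V_gt1 xQ yQ; set M := Num.truncn (RCO * K%:R) => eq_code.
have codeK z k : in_core_QK z -> z k = (nat_of_ord (code M z k))%:R / K%:R.
  move=> [zC /in_QKE zI]; rewrite ffunE inordK; last first.
    by rewrite ltnS le_truncn // ler_pM2r // in_core_le.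
  by rewrite truncnK ?mulfK // natrEint zI mulr_ge0 ?in_core_ge0 // ltW.
by apply/ffunP => k; rewrite (codeK x) // (codeK y) // eq_code.
Qed.

Section SDA.
Variables (w : {ffun V -> R}) (r : nat -> {ffun V -> R}).
Hypotheses (r0Q : in_core_QK (r 0))
  (r_step : forall n, SDA_step Z RCO K w (r n) (r n.+1)).

Lemma SDA_in_core_QK n : in_core_QK (r n).
Proof.
elim: n => // n IHn.
case: (r_step n) => [[i [j [[D [depD [jD _]]] [_ [_ ->]]]]]|[_ ->]] //.
apply: move_in_core_QK => // Y iY jY.
apply: dep_slack ((in_coreE _).1 IHn.1) depD iY _.
by apply: contra jY => /subsetP; apply.
Qed.

Lemma stationary_of_SDA_fixed n : r n.+1 = r n -> stationary w (r n).
Proof.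
case: (r_step n) => [[i [j [_ [_ [lt_g ->]]]]] moved|[x_st _]] //.
by move: lt_g; rewrite moved ltxx.
Qed.

Lemma SDA_fixed_of_stationary n : stationary w (r n) -> r n.+1 = r n.
Proof.
case: (r_step n) => [[i [j [adm [_ [lt_g _]]]]] x_st|[_ ->]] //.
by have := x_st i j adm; rewrite leNgt lt_g.
Qed.

Lemma SDA_constant_from N : r N.+1 = r N -> forall n, (N <= n)%N -> r n = r N.
Proof.
move=> rN; elim => [|n IHn]; first by rewrite leqn0 => /eqP ->.
rewrite leq_eqVlt => /orP[/eqP <- //|/IHn rn].
by rewrite SDA_fixed_of_stationary rn //; apply: stationary_of_SDA_fixed.
Qed.

Lemma SDA_halts : (1 < #|V|)%N -> exists N, r N.+1 = r N.
Proof.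
move=> V_gt1.
apply: (finite_descent (code := code (Num.truncn (RCO * K%:R))) (phi := g w)).
  by move=> m n /(code_inj V_gt1 (SDA_in_core_QK m) (SDA_in_core_QK n)).
by move=> n; case: (r_step n) => [[i [j [_ [_ [lt_g ->]]]]]|[_ ->]].
Qed.

End SDA.

End Lattice.

End Core.

Theorem theorem2 (R : realType) (V Pk : finType) (Z : V -> {set Pk})
  (hV : (1 < #|V|)%N)
  (RCO : R) (hRCO : is_RCO Z RCO)
  (Pstar : {set {set V}}) (hP : fundamental_partition Z RCO Pstar)
  (hP2 : (2 <= #|Pstar|)%N)
  (w : {ffun V -> R}) (hw : forall i, 0 < w i)
  (r : nat -> {ffun V -> R})
  (h0 : in_core Z RCO (r 0%N) /\ in_QK (#|Pstar|).-1 (r 0%N))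
  (hstep : forall n, SDA_step Z RCO (#|Pstar|).-1 w (r n) (r n.+1)) :
  exists N : nat,
    (forall n, (N <= n)%N -> r n = r N) /\
    g_minimizer Z RCO (#|Pstar|).-1 w (r N).
Proof.
have K_gt0 : (0 < #|Pstar|.-1)%N by move: hP2; case: #|Pstar| => [|[|n]].
have w_ge0 k : 0 <= w k by exact/ltW.
have [N rN] := SDA_halts K_gt0 h0 hstep hV.
exists N; split; first exact: SDA_constant_from.
have [NC NQ] := SDA_in_core_QK K_gt0 h0 hstep N.
split; [exact: NC | split; [exact: NQ | move=> s sC sQ]].
by apply: (stationary_optimal K_gt0 w_ge0 (stationary_of_SDA_fixed hstep rN)); split.
Qed.
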